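(* Let $k$ be a field of characteristic $\neq 2$, let $\mathcal O$ be the Lie algebra described in the context, and let $\mathcal I$ be a closed ideal of $\mathcal O$ with $J=J_{\mathcal I}=q(t)k[t]\neq 0$. Put $w_i=v_iq(t)$, $i=0,1,2$. Then $\mathcal I$ is one of the following ideals: (a) $\mathcal I=\mathcal OJt(t-1)\oplus k(w_0t\pm w_1t)\oplus k(w_0(t-1)\pm w_2(t-1))$ (four possibilities, the two signs chosen independently); (b) $\mathcal I=\mathcal OJt(t-1)\oplus\bigl(\bigoplus_{i=0}^2kw_it\bigr)\oplus k(w_0(t-1)\pm w_2(t-1))$ (two possibilities); in this case $\mathcal I=\mathcal OJt\oplus k(w_0\pm w_2)$; (c) $\mathcal I=\mathcal OJt(t-1)\oplus k(w_0t\pm w_1t)\oplus\bigl(\bigoplus_{i=0}^2kw_i(t-1)\bigr)$ (two possibilities); in this case $\mathcal I=\mathcal OJ(t-1)\oplus k(w_0\pm w_1)$; (d) $\mathcal I=\mathcal OJ$.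
   Context: $\mathcal O$ is the Lie algebra over $k$ which is a free $k[t]$-module with basis $v_0,v_1,v_2$, with $k[t]$-bilinear bracket determined by $[v_0,v_1]=-v_2(t-1)$, $[v_1,v_2]=-v_0$, $[v_2,v_0]=v_1t$ (it is isomorphic to the Onsager algebra). An ideal $\mathcal I$ of $\mathcal O$ is closed if $\{x\in\mathcal O:[x,\mathcal O]\subseteq\mathcal I\}=\mathcal I$. For an ideal $\mathcal I$, $J_{\mathcal I}=\{p(t)\in k[t]: v_0p(t)+v_1p_1(t)+v_2p_2(t)\in\mathcal I\text{ for some }p_1,p_2\in k[t]\}$ (an ideal of $k[t]$). For an ideal $J$ of $k[t]$, $\mathcal OJ=v_0J\oplus v_1J\oplus v_2J$, and $\mathcal OJt$, $\mathcal OJ(t-1)$, $\mathcal OJt(t-1)$ denote $\mathcal O$ applied to the ideals $Jt$, $J(t-1)$, $Jt(t-1)$. *)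

From HB Require Import structures.
From mathcomp Require Import all_boot all_order all_algebra.
Set Implicit Arguments. Unset Strict Implicit. Unset Printing Implicit Defensive.
Import GRing.Theory.
Local Open Scope ring_scope.

(* The Onsager-type Lie algebra O = k[t]v0 + k[t]v1 + k[t]v2, an element
   v0 p0 + v1 p1 + v2 p2 being represented by the triple (p0, p1, p2). *)
Definition Ob (k : fieldType) := ({poly k} * {poly k} * {poly k})%type.

Section Onsager.
Variable k : fieldType.

Definition mkO (p0 p1 p2 : {poly k}) : Ob k := (p0, p1, p2).
Definition c0 (x : Ob k) : {poly k} := x.1.1.
Definition c1 (x : Ob k) : {poly k} := x.1.2.
Definition c2 (x : Ob k) : {poly k} := x.2.

Definition zeroO : Ob k := mkO 0 0 0.
Definition addO (x y : Ob k) : Ob k :=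
  mkO (c0 x + c0 y) (c1 x + c1 y) (c2 x + c2 y).
Definition scaleO (a : k) (x : Ob k) : Ob k :=
  mkO (a *: c0 x) (a *: c1 x) (a *: c2 x).

(* k[t]-bilinear bracket with [v0,v1] = -v2(t-1), [v1,v2] = -v0,
   [v2,v0] = v1 t (and [vi,vi] = 0, antisymmetry). *)
Definition bracket (x y : Ob k) : Ob k :=
  mkO (- (c1 x * c2 y - c2 x * c1 y))
      ((c2 x * c0 y - c0 x * c2 y) * 'X)
      ((c0 x * c1 y - c1 x * c0 y) * (- ('X - 1))).

Definition is_ideal (I : Ob k -> Prop) : Prop :=
  [/\ I zeroO,
      (forall x y, I x -> I y -> I (addO x y)),
      (forall (a : k) x, I x -> I (scaleO a x)) &
      (forall x y, I x -> I (bracket x y))].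

Definition closed_ideal (I : Ob k -> Prop) : Prop :=
  forall x, (forall y, I (bracket x y)) <-> I x.

Definition J_of (I : Ob k -> Prop) (p : {poly k}) : Prop :=
  exists p1 p2, I (mkO p p1 p2).

Definition idmul (J : {poly k} -> Prop) (r : {poly k}) (p : {poly k}) : Prop :=
  exists p', J p' /\ p = p' * r.

Definition OJ (J : {poly k} -> Prop) (x : Ob k) : Prop :=
  [/\ J (c0 x), J (c1 x) & J (c2 x)].

Definition sum_span (A : Ob k -> Prop) (vs : seq (Ob k)) (x : Ob k) : Prop :=
  exists y, A y /\ exists cs : seq k, size cs = size vs /\
    x = addO y (foldr addO zeroO [seq scaleO c.1 c.2 | c <- zip cs vs]).

(* w_i r = v_i q r, where w_i = v_i q *)
Definition w0 (q r : {poly k}) : Ob k := mkO (q * r) 0 0.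
Definition w1 (q r : {poly k}) : Ob k := mkO 0 (q * r) 0.
Definition w2 (q r : {poly k}) : Ob k := mkO 0 0 (q * r).

End Onsager.

From HB Require Import structures.
From mathcomp Require Import all_boot all_order all_algebra.
From mathcomp Require Import ring.
From Stdlib Require Import Classical.
Set Implicit Arguments.
Unset Strict Implicit.
Unset Printing Implicit Defensive.
Import GRing.Theory.
Local Open Scope ring_scope.

(* Closedness makes I a k[t]-submodule, and brackets of an element with
   v0-coordinate q show that I contains O J t(t-1).  Writing an element of I
   as q z with z = z(1) t - z(0) (t - 1) modulo t(t-1), I is determined by two
   subspaces of k^3, its fibres at t = 1 and at t = 0.  Each fibre is a closed
   ideal of a three-dimensional Lie algebra with two-dimensional derived
   algebra, and contains a vector with v0-coordinate 1; such an ideal is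
   either everything or the line k(v0 + s v1), resp. k(v0 + s v2), with
   s = 1 or -1.  The four combinations are the cases (a)-(d). *)

Section ClosedIdealsOfFibre.
Variables (k : fieldType) (P : k -> k -> k -> Prop).
Hypothesis PD : forall a b c a' b' c',
  P a b c -> P a' b' c' -> P (a + a') (b + b') (c + c').
Hypothesis PZ : forall l a b c, P a b c -> P (l * a) (l * b) (l * c).
(* (a, b, c) stands for a v0 + b v1 + c v2 in the Lie algebra with
   [v0, v1] = 0, [v1, v2] = -v0 and [v2, v0] = v1 (the fibre of O at t = 1);
   the right-hand side lists its brackets with v0, v1 and v2, so this says
   that P is a closed ideal. *)
Hypothesis P_closed_ideal :
  forall a b c, P a b c <-> [/\ P 0 c 0, P c 0 0 & P (- b) (- a) 0].

Lemma P_eq a b c a' b' c' : P a b c -> a = a' -> b = b' -> c = c' -> P a' b' c'.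
Proof. by move=> Pabc <- <- <-. Qed.

Lemma P_swap a b c : P a b c -> P b a 0.
Proof.
by case/P_closed_ideal => _ _ /(PZ (-1)); rewrite !mulN1r !opprK oppr0.
Qed.

Lemma P_full : P 1 0 0 -> forall a b c, P a b c.
Proof.
move=> P100 a b c; have P010 := P_swap P100.
apply/P_closed_ideal; split.
- by apply: (P_eq (PZ c P010)); ring.
- by apply: (P_eq (PZ c P100)); ring.
- by apply: (P_eq (PD (PZ (- b) P100) (PZ (- a) P010))); ring.
Qed.

Section NotFull.
Hypothesis not_full : ~ P 1 0 0.

Lemma P_third_eq0 a b c : P a b c -> c = 0.
Proof.
case/P_closed_ideal => _ Pc0 _; case: (eqVneq c 0) => // c_neq0.
by case: not_full; apply: (P_eq (PZ c^-1 Pc0)); rewrite ?mulr0 ?mulVf.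
Qed.

Lemma P_sqr a b c : P a b c -> b ^+ 2 = a ^+ 2.
Proof.
move=> Pabc; have Pba := P_swap Pabc; have Pab := P_swap Pba.
have Pd : P (a ^+ 2 - b ^+ 2) 0 0.
  by apply: (P_eq (PD (PZ a Pab) (PZ (- b) Pba))); ring.
case: (eqVneq (a ^+ 2 - b ^+ 2) 0) => [/subr0_eq // | d_neq0].
by case: not_full; apply: (P_eq (PZ (a ^+ 2 - b ^+ 2)^-1 Pd)); rewrite ?mulr0 ?mulVf.
Qed.

Lemma P_line s : P 1 s 0 -> (s = 1 \/ s = -1) /\
  forall a b c, P a b c <-> c = 0 /\ b = s * a.
Proof.
move=> P1s; split.
  by have /eqP := P_sqr P1s; rewrite expr1n sqrf_eq1 => /orP[]/eqP; auto.
move=> a b c; split=> [Pabc | [-> ->]]; last by apply: (P_eq (PZ a P1s)); ring.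
split; first exact: P_third_eq0 Pabc.
have Pd : P 0 (b - s * a) 0.
  by apply: (P_eq (PD (P_swap (P_swap Pabc)) (PZ (- a) P1s))); ring.
by have /eqP := P_sqr Pd; rewrite expr0n sqrf_eq0 subr_eq0 => /eqP.
Qed.

End NotFull.

Lemma closed_ideal_fibre_dichotomy : (exists b c, P 1 b c) ->
  (forall a b c, P a b c) \/
  exists s, (s = 1 \/ s = -1) /\ forall a b c, P a b c <-> c = 0 /\ b = s * a.
Proof.
move=> [s [t P1st]].
case: (classic (P 1 0 0)) => [/P_full | not_full]; [by left | right].
by exists s; apply: P_line not_full _ (P_swap (P_swap P1st)).
Qed.

End ClosedIdealsOfFibre.

Lemma poly_interp01 (R : comNzRingType) (p : {poly R}) :
  exists a b r, p = a%:P * 'X - b%:P * ('X - 1) + 'X * ('X - 1) * r.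
Proof.
set g := p - (p.[1]%:P * 'X - p.[0]%:P * ('X - 1)).
have /factor_theorem [g1 g1E] : root g 0 by rewrite /root /g !hornerE; apply/eqP; ring.
have /factor_theorem [r rE] : root g1 1.
  have : g.[1] = 0 by rewrite /g !hornerE; ring.
  by rewrite g1E !hornerE /root => g11; apply/eqP; rewrite -g11; ring.
exists p.[1], p.[0], r.
by rewrite -[LHS](subrK (p.[1]%:P * 'X - p.[0]%:P * ('X - 1))) -/g g1E rE; ring.
Qed.

Lemma bracket_mulq (k : fieldType) (q u0 u1 u2 y0 y1 y2 : {poly k}) :
  bracket (mkO (q * u0) (q * u1) (q * u2)) (mkO y0 y1 y2) =
  mkO (q * - (u1 * y2 - u2 * y1)) (q * ((u2 * y0 - u0 * y2) * 'X))
      (q * ((u0 * y1 - u1 * y0) * - ('X - 1))).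
Proof. by rewrite /bracket /mkO /c0 /c1 /c2 /=; congr (_, _, _); ring. Qed.

Ltac componentwise_ring :=
  rewrite /bracket /addO /scaleO /w0 /w1 /w2 /mkO /c0 /c1 /c2 /zeroO /=;
  congr (_, _, _); rewrite -?mul_polyC ?polyCM ?polyCN; ring.

Section ClosedIdeal.
Variables (k : fieldType) (I : Ob k -> Prop).
Hypotheses (I_ideal : is_ideal I) (I_closed : closed_ideal I).

Lemma ideal0 : I (zeroO k). Proof. by case: I_ideal. Qed.

Lemma idealD a0 a1 a2 b0 b1 b2 : I (mkO a0 a1 a2) -> I (mkO b0 b1 b2) ->
  I (mkO (a0 + b0) (a1 + b1) (a2 + b2)).
Proof. by case: I_ideal => _ + _ _; apply. Qed.

Lemma ideal_bracket x y : I x -> I (bracket x y).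
Proof. by case: I_ideal => _ _ _; apply. Qed.

Lemma ideal_eq x y : I x -> x = y -> I y. Proof. by move=> Ix <-. Qed.

(* [r x, y] = [x, r y] since the bracket is k[t]-bilinear. *)
Lemma closed_idealM r a0 a1 a2 : I (mkO a0 a1 a2) -> I (mkO (r * a0) (r * a1) (r * a2)).
Proof.
move=> Ia; apply/I_closed => -[[y0 y1] y2].
apply: (ideal_eq (ideal_bracket (mkO (r * y0) (r * y1) (r * y2)) Ia)).
by componentwise_ring.
Qed.

End ClosedIdeal.

Section Fibres.
Variables (k : fieldType) (I : Ob k -> Prop) (q : {poly k}).
Hypotheses (I_ideal : is_ideal I) (I_closed : closed_ideal I).
Hypothesis J_I : forall p, J_of I p <-> exists r, p = q * r.

Let idealD := idealD I_ideal.
Let ideal_bracket := ideal_bracket I_ideal.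
Let idealM := closed_idealM I_ideal I_closed.

Lemma ideal_dvd x : I x -> exists z0 z1 z2, x = mkO (q * z0) (q * z1) (q * z2).
Proof.
case: x => [[a0 a1] a2] Ia.
have [z0 ->] : exists r, a0 = q * r by apply/J_I; exists a1, a2.
have [z1 ->] : exists r, a1 = q * r.
  apply/J_I; have := ideal_bracket (mkO 0 0 (-1)) Ia.
  by rewrite /bracket /c0 /c1 /c2 /= mulr0 subr0 mulrN1 opprK => Ia'; do 2 eexists; exact: Ia'.
have [z2 ->] : exists r, a2 = q * r.
  apply/J_I; have := ideal_bracket (mkO 0 1 0) Ia.
  by rewrite /bracket /c0 /c1 /c2 /= mulr0 mulr1 sub0r opprK => Ia'; do 2 eexists; exact: Ia'.
by exists z0, z1, z2.
Qed.

Lemma ideal_qXX r0 r1 r2 :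
  I (mkO (q * ('X * ('X - 1)) * r0) (q * ('X * ('X - 1)) * r1) (q * ('X * ('X - 1)) * r2)).
Proof.
have [a1 [a2 Iq]] : J_of I q by apply/J_I; exists 1; rewrite mulr1.
have Ir1 : forall r, I (mkO 0 (q * ('X * ('X - 1)) * r) 0).
  move=> r; have := idealM (- r) (ideal_bracket (mkO 1 0 0) (ideal_bracket (mkO 0 1 0) Iq)).
  by move/ideal_eq; apply; componentwise_ring.
have Ir2 : forall r, I (mkO 0 0 (q * ('X * ('X - 1)) * r)).
  move=> r; have := idealM (- r) (ideal_bracket (mkO 1 0 0) (ideal_bracket (mkO 0 0 1) Iq)).
  by move/ideal_eq; apply; componentwise_ring.
have Ir0 : forall r, I (mkO (q * ('X * ('X - 1)) * r) 0 0).
  move=> r; have := ideal_bracket (mkO 0 0 (-1)) (Ir1 r).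
  by move/ideal_eq; apply; componentwise_ring.
by have := idealD (idealD (Ir0 r0) (Ir1 r1)) (Ir2 r2); rewrite !addr0 !add0r.
Qed.

(* Since I contains O J t(t-1), by the Chinese remainder theorem I is determined
   by its images modulo t and modulo t - 1; [fibre 'X] and [fibre ('X - 1)]
   record them as subsets of k^3 (the parts at t = 1 and at t = 0). *)
Definition fibre (e : {poly k}) (a b c : k) : Prop :=
  I (mkO (q * e * a%:P) (q * e * b%:P) (q * e * c%:P)).

Lemma ideal_interpE a0 a1 a2 b0 b1 b2 r0 r1 r2 :
  I (mkO (q * (a0%:P * 'X - b0%:P * ('X - 1) + 'X * ('X - 1) * r0))
         (q * (a1%:P * 'X - b1%:P * ('X - 1) + 'X * ('X - 1) * r1))
         (q * (a2%:P * 'X - b2%:P * ('X - 1) + 'X * ('X - 1) * r2)))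
  <-> fibre 'X a0 a1 a2 /\ fibre ('X - 1) b0 b1 b2.
Proof.
split=> [Ix | [Ia Ib]].
  (* t x and (t - 1) x differ from q t a and q (t - 1) b by O J t(t-1). *)
  split; [move/(idealM 'X): Ix | move/(idealM ('X - 1)): Ix] => Ix.
    have := idealD Ix (ideal_qXX (- (a0%:P - b0%:P + 'X * r0))
      (- (a1%:P - b1%:P + 'X * r1)) (- (a2%:P - b2%:P + 'X * r2))).
    by move/ideal_eq; apply; componentwise_ring.
  have := idealD Ix (ideal_qXX (- (a0%:P - b0%:P + ('X - 1) * r0))
    (- (a1%:P - b1%:P + ('X - 1) * r1)) (- (a2%:P - b2%:P + ('X - 1) * r2))).
  by move/ideal_eq; apply; componentwise_ring.
have := idealD (idealD Ia (idealM (-1) Ib)) (ideal_qXX r0 r1 r2).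
by move/ideal_eq; apply; componentwise_ring.
Qed.

Lemma ideal_evalE z0 z1 z2 : I (mkO (q * z0) (q * z1) (q * z2)) <->
  fibre 'X z0.[1] z1.[1] z2.[1] /\ fibre ('X - 1) z0.[0] z1.[0] z2.[0].
Proof.
have interp01E (a b : k) r : (a%:P * 'X - b%:P * ('X - 1) + 'X * ('X - 1) * r).[1] = a /\
                       (a%:P * 'X - b%:P * ('X - 1) + 'X * ('X - 1) * r).[0] = b.
  by rewrite !hornerE; split; ring.
have [a0 [b0 [r0 ->]]] := poly_interp01 z0.
have [a1 [b1 [r1 ->]]] := poly_interp01 z1.
have [a2 [b2 [r2 ->]]] := poly_interp01 z2.
rewrite !(proj1 (interp01E _ _ _)) !(proj2 (interp01E _ _ _)).
exact: ideal_interpE.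
Qed.

Lemma idealP x : I x <-> exists z0 z1 z2, x = mkO (q * z0) (q * z1) (q * z2) /\
  fibre 'X z0.[1] z1.[1] z2.[1] /\ fibre ('X - 1) z0.[0] z1.[0] z2.[0].
Proof.
split=> [Ix | [z0 [z1 [z2 [-> /ideal_evalE //]]]]].
have [z0 [z1 [z2 xE]]] := ideal_dvd Ix.
by exists z0, z1, z2; split=> //; apply/ideal_evalE; rewrite -xE.
Qed.

Lemma ideal_interpP x : I x -> exists a0 a1 a2 b0 b1 b2 r0 r1 r2,
  x = mkO (q * (a0%:P * 'X - b0%:P * ('X - 1) + 'X * ('X - 1) * r0))
          (q * (a1%:P * 'X - b1%:P * ('X - 1) + 'X * ('X - 1) * r1))
          (q * (a2%:P * 'X - b2%:P * ('X - 1) + 'X * ('X - 1) * r2))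
  /\ fibre 'X a0 a1 a2 /\ fibre ('X - 1) b0 b1 b2.
Proof.
move=> Ix; have [z0 [z1 [z2 xE]]] := ideal_dvd Ix.
have [a0 [b0 [r0 z0E]]] := poly_interp01 z0.
have [a1 [b1 [r1 z1E]]] := poly_interp01 z1.
have [a2 [b2 [r2 z2E]]] := poly_interp01 z2.
move: Ix; rewrite xE z0E z1E z2E => /ideal_interpE Ifib.
by exists a0, a1, a2, b0, b1, b2, r0, r1, r2.
Qed.

Lemma fibre_eq e a b c a' b' c' :
  fibre e a b c -> a = a' -> b = b' -> c = c' -> fibre e a' b' c'.
Proof. by move=> Fabc <- <- <-. Qed.

Lemma fibre_zero e : fibre e 0 0 0.
Proof. by apply: (ideal_eq (ideal0 I_ideal)); rewrite /zeroO /mkO polyC0 !mulr0. Qed.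

Lemma fibreD e a b c a' b' c' : fibre e a b c -> fibre e a' b' c' ->
  fibre e (a + a') (b + b') (c + c').
Proof. by move=> F F'; have := idealD F F'; rewrite /fibre !polyCD !mulrDr. Qed.

Lemma fibreZ e l a b c : fibre e a b c -> fibre e (l * a) (l * b) (l * c).
Proof. by move/(idealM l%:P)/ideal_eq; apply; componentwise_ring. Qed.

Lemma fibre1_bracket a b c (y0 y1 y2 : k) : fibre 'X a b c ->
  fibre 'X (c * y1 - b * y2) (c * y0 - a * y2) 0.
Proof.
move=> /(ideal_bracket (mkO y0%:P y1%:P y2%:P)) Ib.
rewrite /fibre -!mulrA bracket_mulq in Ib; case/ideal_evalE: Ib => F1 _.
by apply: (fibre_eq F1); rewrite !hornerE; ring.
Qed.

Lemma fibre0_bracket a b c (y0 y1 y2 : k) : fibre ('X - 1) a b c ->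
  fibre ('X - 1) (b * y2 - c * y1) 0 (b * y0 - a * y1).
Proof.
move=> /(ideal_bracket (mkO y0%:P y1%:P y2%:P)) Ib.
rewrite /fibre -!mulrA bracket_mulq in Ib; case/ideal_evalE: Ib => _ F0.
by apply: (fibre_eq F0); rewrite !hornerE; ring.
Qed.

Lemma fibre1_closed_idealE a b c : fibre 'X a b c <->
  [/\ fibre 'X 0 c 0, fibre 'X c 0 0 & fibre 'X (- b) (- a) 0].
Proof.
split=> [F | [F0 F1 F2]].
  split; [apply: (fibre_eq (fibre1_bracket 1 0 0 F)) |
          apply: (fibre_eq (fibre1_bracket 0 1 0 F)) |
          apply: (fibre_eq (fibre1_bracket 0 0 1 F))]; ring.
rewrite /fibre -!mulrA; apply/I_closed => -[[y0 y1] y2].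
rewrite bracket_mulq; apply/ideal_evalE; split.
  apply: (fibre_eq (fibreD (fibreD (fibreZ y0.[1] F0) (fibreZ y1.[1] F1)) (fibreZ y2.[1] F2)));
  by rewrite !hornerE; ring.
by apply: (fibre_eq (fibre_zero _)); rewrite !hornerE; ring.
Qed.

(* At t = 0 the roles of v1 and v2 are exchanged. *)
Lemma fibre0_closed_idealE a b c : fibre ('X - 1) a c b <->
  [/\ fibre ('X - 1) 0 0 c, fibre ('X - 1) c 0 0 & fibre ('X - 1) (- b) 0 (- a)].
Proof.
split=> [F | [F0 F1 F2]].
  split; [apply: (fibre_eq (fibre0_bracket 1 0 0 F)) |
          apply: (fibre_eq (fibre0_bracket 0 0 1 F)) |
          apply: (fibre_eq (fibre0_bracket 0 1 0 F))]; ring.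
rewrite /fibre -!mulrA; apply/I_closed => -[[y0 y1] y2].
rewrite bracket_mulq; apply/ideal_evalE; split.
  by apply: (fibre_eq (fibre_zero _)); rewrite !hornerE; ring.
apply: (fibre_eq (fibreD (fibreD (fibreZ y0.[0] F0) (fibreZ y2.[0] F1)) (fibreZ y1.[0] F2)));
by rewrite !hornerE; ring.
Qed.

Lemma fibres_unit : (exists b c, fibre 'X 1 b c) /\ (exists b c, fibre ('X - 1) 1 b c).
Proof.
have [a1 [a2 Iq]] : J_of I q by apply/J_I; exists 1; rewrite mulr1.
have [z0 [z1 [z2 [_ a1E a2E]]]] := ideal_dvd Iq.
move: Iq; rewrite a1E a2E -[X in mkO X]mulr1 => /ideal_evalE.
rewrite !hornerE => -[F1 F0]; split; do 2 eexists; [exact: F1 | exact: F0].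
Qed.

Lemma fibre1_dichotomy : (forall a b c, fibre 'X a b c) \/
  exists s, (s = 1 \/ s = -1) /\ forall a b c, fibre 'X a b c <-> c = 0 /\ b = s * a.
Proof.
apply: closed_ideal_fibre_dichotomy fibre1_closed_idealE fibres_unit.1.
- exact: fibreD.
- exact: fibreZ.
Qed.

Lemma fibre0_dichotomy : (forall a b c, fibre ('X - 1) a b c) \/
  exists s, (s = 1 \/ s = -1) /\ forall a b c, fibre ('X - 1) a b c <-> b = 0 /\ c = s * a.
Proof.
have [b [c F1bc]] := fibres_unit.2.
have [F | [s [sE F]]] := closed_ideal_fibre_dichotomy
  (P := fun a b c => fibre ('X - 1) a c b)
  (fun a b c a' b' c' => @fibreD _ a c b a' c' b') (fun l a b c => @fibreZ _ l a c b)
  fibre0_closed_idealE (ex_intro _ c (ex_intro _ b F1bc)).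
  by left=> a b' c'; apply: F.
by right; exists s; split=> // a b' c'; apply: F.
Qed.

Lemma OJ_idmulP e y : OJ (idmul (J_of I) e) y <->
  exists r0 r1 r2, y = mkO (q * r0 * e) (q * r1 * e) (q * r2 * e).
Proof.
split.
  case: y => [[y0 y1] y2] [[p0 [/J_I [r0 ->] y0E]] [p1 [/J_I [r1 ->] y1E]] [p2 [/J_I [r2 ->] y2E]]].
  by exists r0, r1, r2; rewrite /c0 /c1 /c2 /= in y0E y1E y2E; rewrite y0E y1E y2E.
case=> r0 [r1 [r2 ->]]; split.
- by exists (q * r0); split=> //; apply/J_I; exists r0.
- by exists (q * r1); split=> //; apply/J_I; exists r1.
- by exists (q * r2); split=> //; apply/J_I; exists r2.
Qed.

Lemma idealE_line1_line0 s1 s2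
  (F1 : forall a b c, fibre 'X a b c <-> c = 0 /\ b = s1 * a)
  (F0 : forall a b c, fibre ('X - 1) a b c <-> b = 0 /\ c = s2 * a) x :
  I x <-> sum_span (OJ (idmul (J_of I) ('X * ('X - 1))))
         [:: addO (w0 q 'X) (scaleO s1 (w1 q 'X));
             addO (w0 q ('X - 1)) (scaleO s2 (w2 q ('X - 1)))] x.
Proof.
split.
  case/ideal_interpP => [a0 [a1 [a2 [b0 [b1 [b2 [r0 [r1 [r2 [-> [/F1[-> ->] /F0[-> ->]]]]]]]]]]]].
  exists (mkO (q * r0 * ('X * ('X - 1))) (q * r1 * ('X * ('X - 1))) (q * r2 * ('X * ('X - 1)))).
  split; first by apply/OJ_idmulP; exists r0, r1, r2.
  by exists [:: a0; - b0]; split=> //; componentwise_ring.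
case=> y [/OJ_idmulP [r0 [r1 [r2 ->]]] [cs [size_cs ->]]].
case: cs size_cs => [|l [|m []]] //= _.
apply/idealP; exists (r0 * ('X * ('X - 1)) + l%:P * 'X + m%:P * ('X - 1)),
  (r1 * ('X * ('X - 1)) + (l * s1)%:P * 'X), (r2 * ('X * ('X - 1)) + (m * s2)%:P * ('X - 1)).
split; first by componentwise_ring.
by split; [apply/F1 | apply/F0]; rewrite !hornerE /=; split; ring.
Qed.

Lemma idealE_full1_line0 s (F1 : forall a b c, fibre 'X a b c)
  (F0 : forall a b c, fibre ('X - 1) a b c <-> b = 0 /\ c = s * a) :
  (forall x, I x <->
     sum_span (OJ (idmul (J_of I) ('X * ('X - 1))))
       [:: w0 q 'X; w1 q 'X; w2 q 'X;
           addO (w0 q ('X - 1)) (scaleO s (w2 q ('X - 1)))] x) /\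
  (forall x, I x <->
     sum_span (OJ (idmul (J_of I) 'X)) [:: addO (w0 q 1) (scaleO s (w2 q 1))] x).
Proof.
split=> x; split.
- case/ideal_interpP => [a0 [a1 [a2 [b0 [b1 [b2 [r0 [r1 [r2 [-> [_ /F0[-> ->]]]]]]]]]]]].
  exists (mkO (q * r0 * ('X * ('X - 1))) (q * r1 * ('X * ('X - 1))) (q * r2 * ('X * ('X - 1)))).
  split; first by apply/OJ_idmulP; exists r0, r1, r2.
  by exists [:: a0; a1; a2; - b0]; split=> //; componentwise_ring.
- case=> y [/OJ_idmulP [r0 [r1 [r2 ->]]] [cs [size_cs ->]]].
  case: cs size_cs => [|l0 [|l1 [|l2 [|m []]]]] //= _.
  apply/idealP; exists (r0 * ('X * ('X - 1)) + l0%:P * 'X + m%:P * ('X - 1)),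
    (r1 * ('X * ('X - 1)) + l1%:P * 'X), (r2 * ('X * ('X - 1)) + l2%:P * 'X + (m * s)%:P * ('X - 1)).
  split; first by componentwise_ring.
  by split; [exact: F1 | apply/F0]; rewrite !hornerE /=; split; ring.
- case/ideal_interpP => [a0 [a1 [a2 [b0 [b1 [b2 [r0 [r1 [r2 [-> [_ /F0[-> ->]]]]]]]]]]]].
  exists (mkO (q * (a0%:P - b0%:P + ('X - 1) * r0) * 'X) (q * (a1%:P + ('X - 1) * r1) * 'X)
              (q * (a2%:P - (s * b0)%:P + ('X - 1) * r2) * 'X)).
  split; first by apply/OJ_idmulP; do 3 eexists.
  by exists [:: b0]; split=> //; componentwise_ring.
- case=> y [/OJ_idmulP [r0 [r1 [r2 ->]]] [cs [size_cs ->]]].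
  case: cs size_cs => [|l []] //= _.
  apply/idealP; exists (r0 * 'X + l%:P), (r1 * 'X), (r2 * 'X + (l * s)%:P).
  split; first by componentwise_ring.
  by split; [exact: F1 | apply/F0]; rewrite !hornerE /=; split; ring.
Qed.

Lemma idealE_line1_full0 s (F1 : forall a b c, fibre 'X a b c <-> c = 0 /\ b = s * a)
  (F0 : forall a b c, fibre ('X - 1) a b c) :
  (forall x, I x <->
     sum_span (OJ (idmul (J_of I) ('X * ('X - 1))))
       [:: addO (w0 q 'X) (scaleO s (w1 q 'X));
           w0 q ('X - 1); w1 q ('X - 1); w2 q ('X - 1)] x) /\
  (forall x, I x <->
     sum_span (OJ (idmul (J_of I) ('X - 1))) [:: addO (w0 q 1) (scaleO s (w1 q 1))] x).
Proof.
split=> x; split.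
- case/ideal_interpP => [a0 [a1 [a2 [b0 [b1 [b2 [r0 [r1 [r2 [-> [/F1[-> ->] _]]]]]]]]]]].
  exists (mkO (q * r0 * ('X * ('X - 1))) (q * r1 * ('X * ('X - 1))) (q * r2 * ('X * ('X - 1)))).
  split; first by apply/OJ_idmulP; exists r0, r1, r2.
  by exists [:: a0; - b0; - b1; - b2]; split=> //; componentwise_ring.
- case=> y [/OJ_idmulP [r0 [r1 [r2 ->]]] [cs [size_cs ->]]].
  case: cs size_cs => [|l [|m0 [|m1 [|m2 []]]]] //= _.
  apply/idealP; exists (r0 * ('X * ('X - 1)) + l%:P * 'X + m0%:P * ('X - 1)),
    (r1 * ('X * ('X - 1)) + (l * s)%:P * 'X + m1%:P * ('X - 1)),
    (r2 * ('X * ('X - 1)) + m2%:P * ('X - 1)).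
  split; first by componentwise_ring.
  by split; [apply/F1 | exact: F0]; rewrite !hornerE /=; split; ring.
- case/ideal_interpP => [a0 [a1 [a2 [b0 [b1 [b2 [r0 [r1 [r2 [-> [/F1[-> ->] _]]]]]]]]]]].
  exists (mkO (q * (a0%:P - b0%:P + 'X * r0) * ('X - 1))
              (q * ((s * a0)%:P - b1%:P + 'X * r1) * ('X - 1)) (q * (- b2%:P + 'X * r2) * ('X - 1))).
  split; first by apply/OJ_idmulP; do 3 eexists.
  by exists [:: a0]; split=> //; componentwise_ring.
- case=> y [/OJ_idmulP [r0 [r1 [r2 ->]]] [cs [size_cs ->]]].
  case: cs size_cs => [|l []] //= _.
  apply/idealP; exists (r0 * ('X - 1) + l%:P), (r1 * ('X - 1) + (l * s)%:P), (r2 * ('X - 1)).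
  split; first by componentwise_ring.
  by split; [apply/F1 | exact: F0]; rewrite !hornerE /=; split; ring.
Qed.

Lemma idealE_full1_full0 (F1 : forall a b c, fibre 'X a b c)
  (F0 : forall a b c, fibre ('X - 1) a b c) x :
  I x <-> OJ (J_of I) x.
Proof.
split=> [/idealP [z0 [z1 [z2 [-> _]]]] | ].
  by split; apply/J_I; [exists z0 | exists z1 | exists z2].
case: x => [[x0 x1] x2] [] /=; rewrite /c0 /c1 /c2 /= => /J_I [r0 ->] /J_I [r1 ->] /J_I [r2 ->].
by apply/idealP; exists r0, r1, r2.
Qed.

End Fibres.

Theorem proposition4p10 (k : fieldType) (I : Ob k -> Prop) (q : {poly k}) :
  (2 \notin [pchar k])%N ->
  is_ideal I -> closed_ideal I ->
  (forall p, J_of I p <-> exists r, p = q * r) ->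
  q != 0 ->
  (* (a) *)
  (exists s1 s2 : k, (s1 = 1 \/ s1 = -1) /\ (s2 = 1 \/ s2 = -1) /\
     forall x, I x <->
       sum_span (OJ (idmul (J_of I) ('X * ('X - 1))))
         [:: addO (w0 q 'X) (scaleO s1 (w1 q 'X));
             addO (w0 q ('X - 1)) (scaleO s2 (w2 q ('X - 1)))] x)
  \/
  (* (b) *)
  (exists s : k, (s = 1 \/ s = -1) /\
     (forall x, I x <->
       sum_span (OJ (idmul (J_of I) ('X * ('X - 1))))
         [:: w0 q 'X; w1 q 'X; w2 q 'X;
             addO (w0 q ('X - 1)) (scaleO s (w2 q ('X - 1)))] x) /\
     (forall x, I x <->
       sum_span (OJ (idmul (J_of I) 'X)) [:: addO (w0 q 1) (scaleO s (w2 q 1))] x))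
  \/
  (* (c) *)
  (exists s : k, (s = 1 \/ s = -1) /\
     (forall x, I x <->
       sum_span (OJ (idmul (J_of I) ('X * ('X - 1))))
         [:: addO (w0 q 'X) (scaleO s (w1 q 'X));
             w0 q ('X - 1); w1 q ('X - 1); w2 q ('X - 1)] x) /\
     (forall x, I x <->
       sum_span (OJ (idmul (J_of I) ('X - 1))) [:: addO (w0 q 1) (scaleO s (w1 q 1))] x))
  \/
  (* (d) *)
  (forall x, I x <-> OJ (J_of I) x).
Proof.
move=> _ I_ideal I_closed J_I _.
case: (fibre1_dichotomy I_ideal I_closed J_I) => [F1 | [s1 [s1E F1]]];
case: (fibre0_dichotomy I_ideal I_closed J_I) => [F0 | [s0 [s0E F0]]].
- by do 3 right; exact: idealE_full1_full0 F1 F0.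
- by right; left; exists s0; split; last exact: idealE_full1_line0 F1 F0.
- by do 2 right; left; exists s1; split; last exact: idealE_line1_full0 F1 F0.
- by left; exists s1, s0; do 2 split=> //; exact: idealE_line1_line0 F1 F0.
Qed.
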